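(* Let $T$ be an interface element and $\overline X\in l$ fixed. Define the piecewise $2\times4$ matrix function $V(X)=(X-\overline X)^T\otimes I_2$ for $X\in\overline T^+$ and $V(X)=\big((X-\overline X)^T\otimes I_2\big)\overline M^+$ for $X\in\overline T^-$. Then each column of $V$ is an IFE function on $T$ (with respect to any $F\in l$), i.e., it belongs to the local IFE space $\mathbf S_h(T)$.
   Context: Lamé parameters $\lambda^\pm,\mu^\pm>0$; stress $\sigma^s(\mathbf v)=\lambda^s(\nabla\cdot\mathbf v)I+2\mu^s\epsilon(\mathbf v)$. $T$ is a triangle with $\Pi_T=[\mathrm{span}\{1,x,y\}]^2$, or a square with $\Pi_T=[\mathrm{span}\{1,x,y,xy\}]^2$ or $[\mathrm{span}\{1,x,y,x^2-y^2\}]^2$. $\Gamma$ meets $\partial T$ at $D,E$; $l$ is the line through them with unit normal $\bar{\mathbf n}=(\bar n_1,\bar n_2)$, splitting $T$ into $\overline T^\pm$. An IFE function w.r.t. $F\in l$ is piecewise $\boldsymbol\phi^s\in\Pi_T$ on $\overline T^s$ with $\boldsymbol\phi^-=\boldsymbol\phi^+$ on $l$, (square cases) equal coefficient vectors of $xy$ (resp. $x^2-y^2$) in $\boldsymbol\phi^\pm$, and $\sigma^+(\boldsymbol\phi^+)(F)\bar{\mathbf n}=\sigma^-(\boldsymbol\phi^-)(F)\bar{\mathbf n}$; $\mathbf S_h(T)$ is the space of these functions (assumed unisolvent, i.e. spanned by the nodal IFE shape functions). $\overline N^s$ is the $4\times4$ matrix with rows $((\lambda^s+2\mu^s)\bar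 n_1,\mu^s\bar n_2,\mu^s\bar n_2,\lambda^s\bar n_1)$, $(\lambda^s\bar n_2,\mu^s\bar n_1,\mu^s\bar n_1,(\lambda^s+2\mu^s)\bar n_2)$, $(-\bar n_2,0,\bar n_1,0)$, $(0,-\bar n_2,0,\bar n_1)$; $\overline M^+=(\overline N^-)^{-1}\overline N^+$. $\otimes$ is the Kronecker product. *)

From HB Require Import structures.
From mathcomp Require Import all_boot all_order all_algebra.
Set Implicit Arguments. Unset Strict Implicit. Unset Printing Implicit Defensive.
Import Order.TTheory GRing.Theory Num.Theory.
Local Open Scope ring_scope.

Section IFE.
Variable R : realFieldType.

Definition i0 : 'I_2 := @Ordinal 2 0 isT.
Definition i1 : 'I_2 := @Ordinal 2 1 isT.
Definition px (X : 'cV[R]_2) : R := X i0 ord0.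
Definition py (X : 'cV[R]_2) : R := X i1 ord0.
Definition dot (X Y : 'cV[R]_2) : R := px X * px Y + py X * py Y.

(* Kronecker product, standard index convention:
   (A (x) B)_{(i1 p + i2), (j1 q + j2)} = A i1 j1 * B i2 j2.
   (Stated for nonempty dimensions so that [inord] can be used; all uses
   here have positive dimensions.) *)
Definition kron m n p q (A : 'M[R]_(m.+1, n.+1)) (B : 'M[R]_(p.+1, q.+1))
  : 'M[R]_(m.+1 * p.+1, n.+1 * q.+1) :=
  \matrix_(i < m.+1 * p.+1, j < n.+1 * q.+1)
     (A (inord (i %/ p.+1)) (inord (j %/ q.+1)) * B (inord (i %% p.+1)) (inord (j %% q.+1))).

Inductive elem_kind := Tri | SqBil | SqRot.

Definition triangle_set (A1 A2 A3 : 'cV[R]_2) (X : 'cV[R]_2) : Prop :=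
  exists l1 l2 l3 : R, [/\ 0 <= l1, 0 <= l2, 0 <= l3, l1 + l2 + l3 = 1 &
                        X = l1 *: A1 + l2 *: A2 + l3 *: A3].
Definition noncollinear (A1 A2 A3 : 'cV[R]_2) : Prop :=
  (px A2 - px A1) * (py A3 - py A1) - (py A2 - py A1) * (px A3 - px A1) != 0.
Definition square_set (P : 'cV[R]_2) (h : R) (X : 'cV[R]_2) : Prop :=
  (px P <= px X <= px P + h) /\ (py P <= py X <= py P + h).

Definition is_element (k : elem_kind) (T : 'cV[R]_2 -> Prop) : Prop :=
  match k with
  | Tri => exists A1 A2 A3, noncollinear A1 A2 A3 /\ forall X, T X <-> triangle_set A1 A2 A3 X
  | _ => exists P h, 0 < h /\ forall X, T X <-> square_set P h X
  end.

Definition on_boundary (T : 'cV[R]_2 -> Prop) (D : 'cV[R]_2) : Prop :=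
  T D /\ forall e : R, 0 < e -> exists Y, ~ T Y /\ dot (Y - D) (Y - D) < e.

Definition on_line (D nb X : 'cV[R]_2) : Prop := dot (X - D) nb = 0.
Definition Tplus (T : 'cV[R]_2 -> Prop) (D nb X : 'cV[R]_2) : Prop :=
  T X /\ 0 <= dot (X - D) nb.
Definition Tminus (T : 'cV[R]_2 -> Prop) (D nb X : 'cV[R]_2) : Prop :=
  T X /\ dot (X - D) nb <= 0.

(* An element of Pi_T, given by its coefficient vectors:
   phi(x,y) = pa + x pb + y pc + q(x,y) pd, q = 0 (Tri), xy (SqBil), x^2-y^2 (SqRot). *)
Record piece := Piece { pa : 'cV[R]_2; pb : 'cV[R]_2; pc : 'cV[R]_2; pd : 'cV[R]_2 }.

Definition qfun (k : elem_kind) (X : 'cV[R]_2) : R :=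
  match k with Tri => 0 | SqBil => px X * py X | SqRot => px X ^+ 2 - py X ^+ 2 end.
Definition dxq (k : elem_kind) (X : 'cV[R]_2) : R :=
  match k with Tri => 0 | SqBil => py X | SqRot => 2 * px X end.
Definition dyq (k : elem_kind) (X : 'cV[R]_2) : R :=
  match k with Tri => 0 | SqBil => px X | SqRot => - (2 * py X) end.

Definition in_PiT (k : elem_kind) (p : piece) : Prop := k = Tri -> pd p = 0.

Definition peval (k : elem_kind) (p : piece) (X : 'cV[R]_2) : 'cV[R]_2 :=
  pa p + px X *: pb p + py X *: pc p + qfun k X *: pd p.

(* Gradient matrix (grad phi)_{ij} = d phi_i / d x_j at X. *)
Definition pgrad (k : elem_kind) (p : piece) (X : 'cV[R]_2) : 'M[R]_2 :=
  \matrix_(i < 2, j < 2)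
    (if j == i0 then (pb p + dxq k X *: pd p) i ord0
                else (pc p + dyq k X *: pd p) i ord0).

(* sigma(v) = lambda (div v) I + 2 mu eps(v), eps(v) = (grad v + grad v^T)/2. *)
Definition stress (lam mu : R) (G : 'M[R]_2) : 'M[R]_2 :=
  (lam * \tr G)%:M + mu *: (G + G^T).

Definition IFE_function (k : elem_kind) (T : 'cV[R]_2 -> Prop) (D nb : 'cV[R]_2)
    (lamp mup lamm mum : R) (F : 'cV[R]_2) (u : 'cV[R]_2 -> 'cV[R]_2) : Prop :=
  exists pp pm : piece,
    in_PiT k pp /\ in_PiT k pm /\
        (forall X, Tplus T D nb X -> u X = peval k pp X) /\
        (forall X, Tminus T D nb X -> u X = peval k pm X) /\
        (forall X, on_line D nb X -> peval k pm X = peval k pp X) /\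
        (k <> Tri -> pd pp = pd pm) /\
        stress lamp mup (pgrad k pp F) *m nb = stress lamm mum (pgrad k pm F) *m nb.

Definition Nmat (lam mu : R) (nb : 'cV[R]_2) : 'M[R]_4 :=
  let n1 := px nb in let n2 := py nb in
  \matrix_(i < 4, j < 4)
   nth 0 (nth [::]
     [:: [:: (lam + 2 * mu) * n1; mu * n2; mu * n2; lam * n1];
         [:: lam * n2; mu * n1; mu * n1; (lam + 2 * mu) * n2];
         [:: - n2; 0; n1; 0];
         [:: 0; - n2; 0; n1]] i) j.

Definition Mplus (lamp mup lamm mum : R) (nb : 'cV[R]_2) : 'M[R]_4 :=
  invmx (Nmat lamm mum nb) *m Nmat lamp mup nb.

Definition Vmat (lamp mup lamm mum : R) (D nb Xbar X : 'cV[R]_2) : 'M[R]_(1 * 2, 2 * 2) :=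
  if 0 <= dot (X - D) nb then kron (X - Xbar)^T (1%:M : 'M[R]_2)
  else kron (X - Xbar)^T (1%:M : 'M[R]_2) *m Mplus lamp mup lamm mum nb.

End IFE.

From HB Require Import structures.
From mathcomp Require Import all_boot all_order all_algebra.
From mathcomp Require Import ring lra.
Import Order.TTheory GRing.Theory Num.Theory.
Local Open Scope ring_scope.

(* Column j of V is the affine field X |-> ((X - Xbar)^T (x) I_2) w, with
   w = e_j on T^+ and w = M^+ e_j on T^-; its gradient has the two halves of w
   as columns.  The first two rows of N^s w are the traction sigma^s nbar of
   such a piece, and the last two rows are ((nbar^perp)^T (x) I_2) w, its
   derivative along l.  Hence N^- w^- = N^+ w^+ says exactly that the tractions
   agree and that the two pieces, which both vanish at Xbar on l, agree along l.
   Since det N^- = (lambda + 2 mu) mu |nbar|^4 != 0, the choice w^- = M^+ w^+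
   satisfies this identity. *)

Section AffineIFE.
Context {R : realFieldType}.
Implicit Types (v X Y Xbar nb D : 'cV[R]_2) (w wp wm : 'cV[R]_(2 + 2)) (lam mu : R).

Lemma ord2E (i : 'I_2) : i = i0 \/ i = i1.
Proof. by case: i => [[|[|//]] hi]; [left | right]; apply/val_inj. Qed.

Lemma sum_ord2 (F : 'I_2 -> R) : \sum_(i < 2) F i = F i0 + F i1.
Proof. by rewrite big_ord_recr big_ord1; congr (F _ + F _); apply/val_inj. Qed.

Lemma row_mx_cV2E (b c : 'cV[R]_2) :
  row_mx b c = \matrix_(i, j) (if j == i0 then b i ord0 else c i ord0).
Proof.
by apply/matrixP => i j; rewrite !mxE -val_eqE; case: splitP => k /= ->; rewrite (ord1 k).
Qed.

Definition kronI v : 'M[R]_(2, 2 + 2) := row_mx (px v *: 1%:M) (py v *: 1%:M).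

Definition rot90 v : 'cV[R]_2 := \col_i (if i == i0 then - py v else px v).

Lemma px_rot90 v : px (rot90 v) = - py v. Proof. by rewrite /px mxE. Qed.
Lemma py_rot90 v : py (rot90 v) = px v. Proof. by rewrite /py mxE. Qed.

Lemma kron_trmx_id v : kron v^T (1%:M : 'M[R]_2) = kronI v.
Proof.
apply/matrixP => i j; rewrite !mxE; case: splitP => k /= ->; rewrite !mxE.
all: rewrite (divn_small (ltn_ord i)) (modn_small (ltn_ord i)) ?inord_val.
- rewrite (divn_small (ltn_ord k)) (modn_small (ltn_ord k)) inord_val.
  by rewrite /px; congr (v _ _ * _); apply/val_inj; rewrite /= inordK.
- rewrite divnDl // divnn /= (divn_small (ltn_ord k)) modnDl (modn_small (ltn_ord k)) inord_val.
  by rewrite /py; congr (v _ _ * _); apply/val_inj; rewrite /= inordK.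
Qed.

Lemma kronI_mul v w : kronI v *m w = px v *: usubmx w + py v *: dsubmx w.
Proof. by rewrite -{1}[w]vsubmxK mul_row_col -!scalemxAl !mul1mx. Qed.

Lemma kronIZ a v : kronI (a *: v) = a *: kronI v.
Proof. by rewrite /kronI scale_row_mx !scalerA /px /py !mxE. Qed.

Lemma dot_scale_tangent v nb : dot v nb = 0 -> dot nb nb *: v = dot v (rot90 nb) *: rot90 nb.
Proof.
rewrite /dot => hv; apply/matrixP => i j; rewrite [j]ord1.
case: (ord2E i) => ->; rewrite !mxE /= -/(px v) -/(py v) px_rot90 py_rot90; apply/eqP.
- by rewrite -subr_eq0 -(mulr0 (px nb)) -hv; apply/eqP; ring.
- by rewrite -subr_eq0 -(mulr0 (py nb)) -hv; apply/eqP; ring.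
Qed.

Lemma dsubmx_Nmat lam mu nb : dsubmx (Nmat lam mu nb : 'M_(2 + 2, 2 + 2)) = kronI (rot90 nb).
Proof.
apply/matrixP => i j; rewrite !mxE; case: splitP => k /= ->; rewrite !mxE.
all: case: (ord2E i) => ->; case: (ord2E k) => ->.
all: by rewrite /= ?mulr1 ?mulr0 ?px_rot90 ?py_rot90.
Qed.

Lemma traction_Nmat lam mu nb (b c : 'cV[R]_2) :
  stress lam mu (row_mx b c) *m nb = usubmx (Nmat lam mu nb : 'M_(2 + 2, 2 + 2)) *m col_mx b c.
Proof.
rewrite -[usubmx _]hsubmxK mul_row_col row_mx_cV2E.
apply/matrixP => i j; rewrite [j]ord1.
rewrite !mxE /mxtrace !sum_ord2 !mxE /mxtrace !sum_ord2 !mxE /px /py.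
by case: (ord2E i) => ->; rewrite /= ?mulr1n ?mulr0n; ring.
Qed.

(* In the minors, [lift ord0 ord0] is the row [-n2, 0, n1, 0] of N; expanding
   along it first keeps the computation small. *)
Lemma det_Nmat lam mu nb : \det (Nmat lam mu nb) = (lam + 2 * mu) * mu * dot nb nb ^+ 2.
Proof.
rewrite (expand_det_row _ ord0) !big_ord_recl big_ord0 /cofactor !mxE /=.
rewrite !(expand_det_row _ (lift ord0 ord0)) !big_ord_recl !big_ord0 /cofactor !mxE /=.
rewrite ?(mul0r, mulr0, add0r, addr0).
rewrite !(expand_det_row _ ord0) !big_ord_recl !big_ord0 /cofactor !det_mx11 !mxE /=.
by rewrite /dot; ring.
Qed.

Lemma Nmat_unitmx lam mu nb :
  0 < lam -> 0 < mu -> dot nb nb != 0 -> Nmat lam mu nb \in unitmx.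
Proof.
move=> lam_gt0 mu_gt0 nb_neq0.
rewrite unitmxE det_Nmat unitfE !mulf_neq0 ?expf_neq0 ?(lt0r_neq0 mu_gt0) //.
by apply: lt0r_neq0; lra.
Qed.

Lemma kronI_mul_tangent {lamp mup lamm mum nb v wp wm} :
  dot nb nb != 0 -> dot v nb = 0 ->
  Nmat lamm mum nb *m wm = Nmat lamp mup nb *m wp ->
  kronI v *m wm = kronI v *m wp.
Proof.
move=> nb_neq0 hv hN.
have rot_eq : kronI (rot90 nb) *m wm = kronI (rot90 nb) *m wp.
  by rewrite -{1}(dsubmx_Nmat lamm mum) mul_dsub_mx hN -mul_dsub_mx dsubmx_Nmat.
apply: (scalerI nb_neq0).
by rewrite !scalemxAl -kronIZ dot_scale_tangent // kronIZ -!scalemxAl rot_eq.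
Qed.

Lemma dot_sub_on_line {D nb X Y} : on_line D nb X -> on_line D nb Y -> dot (X - Y) nb = 0.
Proof.
move=> hX hY; have -> : dot (X - Y) nb = dot (X - D) nb - dot (Y - D) nb.
  by rewrite /dot /px /py !mxE; ring.
by rewrite hX hY subrr.
Qed.

Definition affine_piece Xbar w : piece R :=
  Piece (- (px Xbar *: usubmx w + py Xbar *: dsubmx w)) (usubmx w) (dsubmx w) 0.

Lemma peval_affine_piece k Xbar w X : peval k (affine_piece Xbar w) X = kronI (X - Xbar) *m w.
Proof. by rewrite kronI_mul /peval /= /px /py; apply/matrixP => i j; rewrite !mxE; ring. Qed.

Lemma pgrad_affine_piece k Xbar w F :
  pgrad k (affine_piece Xbar w) F = row_mx (usubmx w) (dsubmx w).
Proof. by rewrite row_mx_cV2E; apply/matrixP => i j; rewrite !mxE !mulr0 !addr0. Qed.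

Lemma affine_IFE_function {k T D nb Xbar lamp mup lamm mum F} wp wm
    (u : 'cV[R]_2 -> 'cV[R]_2) :
  dot nb nb != 0 -> on_line D nb Xbar ->
  Nmat lamm mum nb *m wm = Nmat lamp mup nb *m wp ->
  (forall X, u X = kronI (X - Xbar) *m (if 0 <= dot (X - D) nb then wp else wm)) ->
  IFE_function k T D nb lamp mup lamm mum F u.
Proof.
move=> nb_neq0 hXbar hN uE.
have cont X : on_line D nb X -> kronI (X - Xbar) *m wm = kronI (X - Xbar) *m wp.
  by move=> hX; apply: (kronI_mul_tangent nb_neq0 _ hN); apply: dot_sub_on_line hX hXbar.
exists (affine_piece Xbar wp), (affine_piece Xbar wm).
do 2 split => //.
split; first by move=> X [_ hX]; rewrite uE hX peval_affine_piece.
split.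
  move=> X [_ hX]; rewrite uE peval_affine_piece; case: ifP => // hX'.
  by rewrite cont // /on_line; apply/eqP; rewrite eq_le hX hX'.
split; first by move=> X hX; rewrite !peval_affine_piece cont.
split=> //.
by rewrite !pgrad_affine_piece !traction_Nmat !vsubmxK !mul_usub_mx hN.
Qed.

End AffineIFE.

Theorem mainTheorem14 (R : realFieldType) (k : elem_kind) (T : 'cV[R]_2 -> Prop)
    (D E nb Xbar : 'cV[R]_2) (lamp mup lamm mum : R) :
  0 < lamp -> 0 < mup -> 0 < lamm -> 0 < mum ->
  is_element k T ->
  on_boundary T D -> on_boundary T E -> D != E ->
  dot nb nb = 1 -> dot (E - D) nb = 0 ->
  on_line D nb Xbar ->
  forall (F : 'cV[R]_2), on_line D nb F ->
  forall j : 'I_(2 * 2),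
    IFE_function k T D nb lamp mup lamm mum F
      (fun X => col j (Vmat lamp mup lamm mum D nb Xbar X)).
Proof.
move=> _ _ lamm_gt0 mum_gt0 _ _ _ _ nb_unit _ hXbar F _ j.
have nb_neq0 : dot nb nb != 0 by rewrite nb_unit oner_neq0.
pose M := Mplus lamp mup lamm mum nb.
apply: (affine_IFE_function (Xbar := Xbar) (delta_mx j 0) (M *m delta_mx j 0)) => //.
- by rewrite mulmxA mulKVmx // Nmat_unitmx.
- move=> X; rewrite /Vmat kron_trmx_id colE; case: ifP => _ //.
  exact/esym/mulmxA.
Qed.
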